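(* Let $\{x^k\}$ be generated by the ABP algorithm described in the context, and assume (A1)–(A7): (A1) $\mathcal F$ is continuously differentiable; (A2) $C$, $Q$ nonempty closed convex, $z_i^*>-\infty$ for each $i$; (A3) each $f_i$ convex; (A4) $\Omega\ne\emptyset$; (A5) $\lambda_k>0$, $\sum\lambda_k=\infty$, $\sum\lambda_k^2<\infty$; (A6) $0<\underline\alpha\le\alpha_k\le\bar\alpha$, $0<\underline\beta\le\beta_k\le\bar\beta$, $0<\underline\gamma\le\gamma_k\le\bar\gamma$ for all $k$; (A7) $\varphi_{\mathrm{lb}}=\varphi^*$. Then there exist a subsequence $\{k_j\}$ and a point $x^\infty\in\Omega$ with $x^{k_j}\to x^\infty$.
   Context: Let $n,m\ge1$, $\mathcal F=(f_1,\dots,f_m)\colon\mathbb R^n\to\mathbb R^m$, $C\subset\mathbb R^n$, $Q\subset\mathbb R^m$, $Q^+:=Q-\mathbb R^m_+=\{y-u:y\in Q,u\in\mathbb R^m_+\}$; $P_S$ is Euclidean projection onto a nonempty closed convex set $S$. Let $z_i^*:=\inf_{x\in C}f_i(x)$, fix $r$ with $r_i>0$, $\sum r_i=1$. Define $\varphi(x):=\max_ir_i(f_i(x)-z_i^* )$, $H(x):=\tfrac12\mathrm{dist}^2(x,C)$, $G(x):=\tfrac12\mathrm{dist}^2(\mathcal F(x),Q^+)$, $\mathcal S:=\{x:H(x)=0,G(x)=0\}$, $\varphi^*:=\inf_{\mathcal S}\varphi$, $\Omega:=\{x\in\mathcal S:\varphi(x)=\varphi^*\}$, $\varphi_{\mathrm{lb}}:=\inf_C\varphi$.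 ABP algorithm: given $x^0$, $\mu>0$, positive sequences $\{\alpha_k\},\{\beta_k\},\{\gamma_k\},\{\lambda_k\}$: $p^k:=P_{Q^+}(\mathcal F(x^k))$, $\rho^k:=\mathcal F(x^k)-p^k$, $z^k:=x^k-P_C(x^k)$, $v^k:=J_{\mathcal F}(x^k)^T\rho^k$, $w^k:=r_{i^*}\nabla f_{i^*}(x^k)$ with arbitrary $i^*\in\arg\max_ir_i(f_i(x^k)-z_i^* )$, $\Delta_k:=\varphi(x^k)-\varphi_{\mathrm{lb}}$, $d^k:=\alpha_k\mathbf 1_{\{\Delta_k\ge0\}}w^k+\beta_kz^k+\gamma_kv^k$, $\eta_k:=\max(\mu,\|d^k\|)$, $x^{k+1}:=x^k-(\lambda_k/\eta_k)d^k$. *)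

From HB Require Import structures.
From mathcomp Require Import all_boot all_order all_algebra.
From mathcomp Require Import all_classical all_reals all_analysis.
Set Implicit Arguments. Unset Strict Implicit. Unset Printing Implicit Defensive.
Import Order.TTheory GRing.Theory Num.Theory.
Import numFieldNormedType.Exports.
Local Open Scope classical_set_scope.
Local Open Scope ring_scope.

Section Defs.
Variable R : realType.

Definition enorm n (v : 'rV[R]_n) : R := Num.sqrt (\sum_(j < n) (v 0 j) ^+ 2).

Definition edist n (x : 'rV[R]_n) (S : set 'rV[R]_n) : R :=
  inf [set enorm (x - y) | y in S].

Definition is_proj n (S : set 'rV[R]_n) (x p : 'rV[R]_n) : Prop :=
  S p /\ forall y, S y -> enorm (x - p) <= enorm (x - y).

Definition ebasis n (j : 'I_n) : 'rV[R]_n := delta_mx 0 j.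

Definition grad n (f : 'rV[R]_n -> R) (x : 'rV[R]_n) : 'rV[R]_n :=
  \row_(j < n) ('D_(ebasis j) f x).

Definition C1 n (f : 'rV[R]_n -> R) : Prop :=
  (forall x, differentiable f x) /\
  (forall j : 'I_n, continuous (fun x => 'D_(ebasis j) f x)).

Definition Qplus m (Q : set 'rV[R]_m) : set 'rV[R]_m :=
  [set z | exists y (u : 'rV[R]_m), Q y /\ (forall i, 0 <= u 0 i) /\ z = y - u].

Definition Fvec n m (f : 'I_m -> 'rV[R]_n -> R) (x : 'rV[R]_n) : 'rV[R]_m :=
  \row_(i < m) f i x.

Definition zstar n m (f : 'I_m -> 'rV[R]_n -> R) (C : set 'rV[R]_n) (i : 'I_m) : R :=
  inf [set f i x | x in C].

(* phi(x) = max_i r_i (f_i(x) - z_i^* )  (m+1 >= 1 objectives) *)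
Definition phi n m (f : 'I_m.+1 -> 'rV[R]_n -> R) (r : 'I_m.+1 -> R)
  (C : set 'rV[R]_n) (x : 'rV[R]_n) : R :=
  \big[Num.max/ r ord0 * (f ord0 x - zstar f C ord0)]_(i < m.+1)
     (r i * (f i x - zstar f C i)).

Definition Hfun n (C : set 'rV[R]_n) (x : 'rV[R]_n) : R := (edist x C) ^+ 2 / 2.

Definition Gfun n m (f : 'I_m -> 'rV[R]_n -> R) (Q : set 'rV[R]_m) (x : 'rV[R]_n) : R :=
  (edist (Fvec f x) (Qplus Q)) ^+ 2 / 2.

Definition feas n m (f : 'I_m -> 'rV[R]_n -> R) (C : set 'rV[R]_n)
  (Q : set 'rV[R]_m) : set 'rV[R]_n :=
  [set x | Hfun C x = 0 /\ Gfun f Q x = 0].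

Definition phistar n m (f : 'I_m.+1 -> 'rV[R]_n -> R) r C Q : R :=
  inf [set phi f r C x | x in feas f C Q].

Definition Omega n m (f : 'I_m.+1 -> 'rV[R]_n -> R) r C Q : set 'rV[R]_n :=
  [set x | feas f C Q x /\ phi f r C x = phistar f r C Q].

Definition philb n m (f : 'I_m.+1 -> 'rV[R]_n -> R) r C : R :=
  inf [set phi f r C x | x in C].

(* ABP iteration: all data of step k, including the (arbitrary) choice of
   index istar k in the argmax, and the projections pQ k = P_{Q^+}(F(x^k)),
   pC k = P_C(x^k). *)
Definition ABP_seq n m (f : 'I_m.+1 -> 'rV[R]_n -> R) (r : 'I_m.+1 -> R)
  (C : set 'rV[R]_n) (Q : set 'rV[R]_m.+1) (mu : R)
  (alpha beta gamma lam : nat -> R)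
  (x : nat -> 'rV[R]_n) (istar : nat -> 'I_m.+1)
  (pQ : nat -> 'rV[R]_m.+1) (pC : nat -> 'rV[R]_n) : Prop :=
  forall k,
    is_proj (Qplus Q) (Fvec f (x k)) (pQ k) /\
    is_proj C (x k) (pC k) /\
    (forall i, r i * (f i (x k) - zstar f C i)
               <= r (istar k) * (f (istar k) (x k) - zstar f C (istar k))) /\
    let rho := Fvec f (x k) - pQ k in
    let z := x k - pC k in
    let v := \sum_(i < m.+1) rho 0 i *: grad (f i) (x k) in
    let w := r (istar k) *: grad (f (istar k)) (x k) in
    let Delta := phi f r C (x k) - philb f r C in
    let d := (alpha k * (if 0 <= Delta then 1 else 0)) *: w
             + beta k *: z + gamma k *: v in
    let eta := Num.max mu (enorm d) in
    x k.+1 = x k - (lam k / eta) *: d.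

End Defs.

(* Fix x* in Omega. Each part of the direction d^k has a large inner product with
   x^k - x*: the projection inequalities give <z^k, x^k - x*> >= |z^k|^2 and,
   since rho^k >= 0 and the f_i are convex, <v^k, x^k - x*> >= |rho^k|^2;
   convexity and phi(x* ) = phi_lb (A7) give <w^k, x^k - x*> >= Delta_k.  Hence
     |x^{k+1} - x*|^2 <= |x^k - x*|^2 - 2 (lam_k / eta_k) g_k + lam_k^2
   with the residual g_k = alo max(Delta_k, 0) + blo |z^k|^2 + glo |rho^k|^2.  Summing, the
   iterates stay bounded and sum_k (lam_k / eta_k) g_k < oo; boundedness keeps
   eta_k bounded, so sum_k lam_k g_k < oo and, as sum_k lam_k = oo, g_k is
   arbitrarily small infinitely often.  A cluster point of the iterates along
   such indices is feasible (z^k, rho^k -> 0) and has phi <= phi_lb = phi^*,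
   so it lies in Omega. *)

From Pilot Require Import Defs.
From HB Require Import structures.
From mathcomp Require Import all_boot all_order all_algebra.
From mathcomp Require Import all_classical all_reals all_analysis.
From mathcomp Require Import ring lra.
Set Implicit Arguments. Unset Strict Implicit. Unset Printing Implicit Defensive.
Import Order.TTheory GRing.Theory Num.Theory.
Import numFieldNormedType.Exports.
Local Open Scope classical_set_scope.
Local Open Scope ring_scope.
Local Notation edist := Defs.edist.

Section InnerProduct.
Variables (R : realType) (n : nat).
Implicit Types (u v w : 'rV[R]_n).

Definition vdot u v : R := \sum_(j < n) u 0 j * v 0 j.

Lemma vdotC u v : vdot u v = vdot v u.
Proof. by apply: eq_bigr => j _; rewrite mulrC. Qed.

Lemma vdotDl u v w : vdot (u + v) w = vdot u w + vdot v w.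
Proof. by rewrite /vdot -big_split; apply: eq_bigr => j _; rewrite mxE mulrDl. Qed.

Lemma vdotNl u w : vdot (- u) w = - vdot u w.
Proof. by rewrite /vdot -sumrN; apply: eq_bigr => j _; rewrite mxE mulNr. Qed.

Lemma vdotBl u v w : vdot (u - v) w = vdot u w - vdot v w.
Proof. by rewrite vdotDl vdotNl. Qed.

Lemma vdotZl a u w : vdot (a *: u) w = a * vdot u w.
Proof. by rewrite /vdot mulr_sumr; apply: eq_bigr => j _; rewrite mxE mulrA. Qed.

Lemma vdotDr u v w : vdot w (u + v) = vdot w u + vdot w v.
Proof. by rewrite vdotC vdotDl !(vdotC w). Qed.

Lemma vdotBr u v w : vdot w (u - v) = vdot w u - vdot w v.
Proof. by rewrite vdotC vdotBl !(vdotC w). Qed.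

Lemma vdotZr a u w : vdot w (a *: u) = a * vdot w u.
Proof. by rewrite vdotC vdotZl vdotC. Qed.

Lemma vdot_suml (I : Type) (s : seq I) (P : pred I) (F : I -> 'rV[R]_n) w :
  vdot (\sum_(i <- s | P i) F i) w = \sum_(i <- s | P i) vdot (F i) w.
Proof.
elim/big_rec2: _ => [|i y1 y2 _ <-]; last by rewrite vdotDl.
by rewrite /vdot big1 // => j _; rewrite mxE mul0r.
Qed.

Lemma vdot_delta u (i : 'I_n) : vdot u (delta_mx 0 i) = u 0 i.
Proof.
rewrite /vdot (bigD1 i) //= big1 ?addr0; first by rewrite mxE !eqxx mulr1.
by move=> j ji; rewrite mxE (negbTE ji) andbF mulr0.
Qed.

Lemma vdotvv_ge0 u : 0 <= vdot u u.
Proof. by apply: sumr_ge0 => j _; rewrite -expr2 sqr_ge0. Qed.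

Lemma vdotBB u v : vdot (u - v) (u - v) = vdot u u - 2 * vdot u v + vdot v v.
Proof. by rewrite vdotBl !vdotBr (vdotC v u); lra. Qed.

Lemma enormE u : enorm u = Num.sqrt (vdot u u).
Proof. by congr Num.sqrt; apply: eq_bigr => j _; rewrite expr2. Qed.

Lemma enorm_ge0 u : 0 <= enorm u.
Proof. exact: sqrtr_ge0. Qed.

Lemma enorm_sqr u : enorm u ^+ 2 = vdot u u.
Proof. by rewrite enormE sqr_sqrtr // vdotvv_ge0. Qed.

Lemma ler_enorm u v : (enorm u <= enorm v) = (vdot u u <= vdot v v).
Proof. by rewrite !enormE ler_sqrt // vdotvv_ge0. Qed.

Lemma enorm_lt u e : vdot u u < e ^+ 2 -> 0 <= e -> enorm u < e.
Proof.
move=> ue e_ge0; have e2_gt0 := le_lt_trans (vdotvv_ge0 u) ue.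
by rewrite enormE -(ger0_norm e_ge0) -sqrtr_sqr ltr_sqrt.
Qed.

Lemma normr_coord_le_enorm u j : `|u 0 j| <= enorm u.
Proof.
rewrite -sqrtr_sqr enormE ler_sqrt ?vdotvv_ge0 // /vdot (bigD1 j) //= -expr2 lerDl.
by apply: sumr_ge0 => i _; rewrite -expr2 sqr_ge0.
Qed.

Lemma vdot_le_sum_normr u v : vdot u v <= (\sum_(j < n) `|u 0 j|) * enorm v.
Proof.
rewrite /vdot mulr_suml; apply: ler_sum => j _.
rewrite (le_trans (ler_norm _)) // normrM ler_wpM2l //.
exact: normr_coord_le_enorm.
Qed.

Lemma normr_coord_le u j : `|u 0 j| <= `|u|.
Proof. by rewrite [leRHS]/Num.Def.normr /= mx_normrE (le_trans _ (le_bigmax _ _ (0, j))). Qed.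

Lemma rV_normr_le u M : 0 <= M -> (forall j, `|u 0 j| <= M) -> `|u| <= M.
Proof. by move=> M_ge0 uM; rewrite /Num.Def.normr /= mx_normrE; apply: bigmax_le => // -[i j] _; rewrite ord1. Qed.

Lemma normr_le_enorm u : `|u| <= enorm u.
Proof. exact/rV_normr_le/normr_coord_le_enorm/enorm_ge0. Qed.

Lemma enorm_le_normr u : enorm u <= n%:R * `|u|.
Proof.
rewrite -[leRHS]ger0_norm ?mulr_ge0 // -sqrtr_sqr enormE ler_sqrt ?sqr_ge0 //.
rewrite (@le_trans _ _ (\sum_(j < n) `|u| ^+ 2)) //.
  apply: ler_sum => j _; rewrite -expr2 -real_normK ?num_real //.
  by rewrite lerXn2r ?nnegrE // normr_coord_le.
rewrite sumr_const card_ord exprMn -[_ *+ n]mulr_natl; apply: ler_wpM2r; first exact: sqr_ge0.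
by rewrite -natrX ler_nat; case: (n) => // k; rewrite expnS leq_pmulr.
Qed.

End InnerProduct.

Section Gradient.
Variables (R : realType) (n : nat).
Implicit Types (f : 'rV[R]_n -> R) (x y v : 'rV[R]_n).

Lemma grad_vdot f x v : differentiable f x -> vdot (grad f x) v = 'D_v f x.
Proof.
move=> df; rewrite deriveE // {2}(row_sum_delta v) linear_sum /vdot.
by apply: eq_bigr => j _; rewrite linearZ /= mxE -deriveE // mulrC.
Qed.

Lemma convex_sub_le_grad f x y : convex_function setT f -> differentiable f x ->
  f x - f y <= vdot (grad f x) (x - y).
Proof.
move=> f_cvx df; suff : f x + 'D_(y - x) f x <= f y.
  by rewrite -grad_vdot // !vdotBr; lra.
set v := y - x; pose q h := h^-1 *: ((f \o shift x) (h *: v) - f x).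
have q_cvg : q @ 0^'+ --> 'D_v f x by apply/cvg_dnbhs_at_right/diff_derivable.
have -> : 'D_v f x = lim (q @ 0^'+) by rewrite (cvg_lim _ q_cvg).
rewrite -lerBrDl; apply: limr_le; first by apply/cvg_ex; exists ('D_v f x).
near=> h.
have h_gt0 : 0 < h by near: h; exact: nbhs_right_gt.
have h_le1 : h <= 1 by near: h; exact: nbhs_right_le.
have := f_cvx (Itv01 (ltW h_gt0) h_le1) y x (in_setT _) (in_setT _).
rewrite /q /=; have -> : h *: v + x = h *: y + (1 - h) *: x.
  by rewrite /v scalerBr scalerBl scale1r -addrA [- _ + _]addrC.
change (f (h *: y + (1 - h) *: x) <= h * f y + (1 - h) * f x ->
        h^-1 * (f (h *: y + (1 - h) *: x) - f x) <= f y - f x).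
rewrite ler_pdivrMl //; lra.
Unshelve. all: by end_near.
Qed.

End Gradient.

Lemma le0_of_le_mul_small (R : realFieldType) (a K : R) :
  0 <= K -> (forall e, 0 < e -> a <= K * e) -> a <= 0.
Proof.
move=> K_ge0 aK; rewrite leNgt; apply/negP => a_gt0.
have K1_gt0 : 0 < K + 1 by rewrite ltr_wpDl.
have := aK (a / (K + 1)) (divr_gt0 a_gt0 K1_gt0).
rewrite mulrA ler_pdivlMr //; nra.
Qed.

Lemma sqr_half_eq0 (R : realFieldType) (a : R) : a ^+ 2 / 2 = 0 <-> a = 0.
Proof.
split=> [/eqP|->]; last by rewrite expr0n mul0r.
by rewrite mulf_eq0 invr_eq0 pnatr_eq0 orbF sqrf_eq0 => /eqP.
Qed.

Section Distance.
Variables (R : realType) (n : nat).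
Implicit Types (S : set 'rV[R]_n) (x y p q : 'rV[R]_n).

Lemma edist_lbound x S : has_lbound [set enorm (x - y) | y in S].
Proof. by exists 0 => _ [y _ <-]; exact: enorm_ge0. Qed.

Lemma edist_ge0 x S : S !=set0 -> 0 <= edist x S.
Proof.
move=> [s Ss]; apply: lb_le_inf; first by exists (enorm (x - s)), s.
by move=> _ [y _ <-]; exact: enorm_ge0.
Qed.

Lemma edist_le x S s : S s -> edist x S <= enorm (x - s).
Proof. by move=> Ss; apply: ge_inf; [exact: edist_lbound | exists s]. Qed.

Lemma edist_approx x S e : S !=set0 -> 0 < e ->
  exists2 s, S s & enorm (x - s) < edist x S + e.
Proof.
move=> [s0 Ss0] e_gt0.
have [_ [s Ss <-] close] := @inf_adherent R [set enorm (x - y) | y in S] e e_gt0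
  (conj (ex_intro _ _ (ex_intro2 _ _ s0 Ss0 erefl)) (edist_lbound x S)).
by exists s.
Qed.

Lemma edist_eq0_approx x S : S !=set0 ->
  (forall e, 0 < e -> exists2 s, S s & `|x - s| <= e) -> edist x S = 0.
Proof.
move=> S_neq0 approx; apply/eqP; rewrite eq_le edist_ge0 // andbT.
apply: (le0_of_le_mul_small (ler0n _ n)) => e /approx [s Ss xs_le].
rewrite (le_trans (edist_le x Ss)) // (le_trans (enorm_le_normr _)) //.
by rewrite ler_wpM2l.
Qed.

Lemma edist_eq0_closure x S : S !=set0 -> edist x S = 0 -> closure S x.
Proof.
move=> S_neq0 x0 B /nbhs_ballP [e /= e_gt0 eB].
have [s Ss] := edist_approx x S_neq0 e_gt0; rewrite x0 add0r => xs_lt.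
exists s; split => //; apply: eB; rewrite -ball_normE /=.
exact: le_lt_trans (normr_le_enorm _) xs_lt.
Qed.

(* Moving p towards q cannot bring it closer to x, so
   2 t <x - p, q - p> <= t^2 |q - p|^2 for t in (0, 1]; take t small. *)
Lemma is_proj_vdot_le0 S x p q : convex_set S -> is_proj S x p -> S q ->
  vdot (x - p) (q - p) <= 0.
Proof.
move=> S_cvx [Sp p_min] Sq; set a := x - p; set b := q - p.
have segment t : 0 < t -> t <= 1 -> 2 * t * vdot a b <= t ^+ 2 * vdot b b.
  move=> t_gt0 t_le1.
  have St : S (t *: q + (1 - t) *: p).
    exact/set_mem/(S_cvx q p (Itv01 (ltW t_gt0) t_le1) (mem_set Sq) (mem_set Sp)).
  have := p_min _ St; rewrite ler_enorm.
  have -> : x - (t *: q + (1 - t) *: p) = a - t *: b.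
    by apply/rowP => j; rewrite /a /b !mxE; ring.
  rewrite (vdotBB a (t *: b)) !vdotZr vdotZl; lra.
rewrite leNgt; apply/negP => ab_gt0.
have bb_ge0 := vdotvv_ge0 b.
set d := vdot a b in segment ab_gt0; set s := vdot b b in segment bb_ge0.
have ds_gt0 : 0 < d + s + 1 by lra.
pose t := d / (d + s + 1).
have t_gt0 : 0 < t by apply: divr_gt0.
have t_le1 : t <= 1 by rewrite /t ler_pdivrMr // mul1r; lra.
have tds : t * (d + s + 1) = d by rewrite /t divfK // gt_eqF.
have dts : 2 * d <= t * s.
  by rewrite -(ler_pM2l t_gt0); move: (segment t t_gt0 t_le1); rewrite expr2; nra.
have : 0 <= t * d by apply: mulr_ge0; lra.
have : 0 <= t * s by apply: mulr_ge0; lra.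
rewrite !mulrDr mulr1 in tds; lra.
Qed.

Lemma is_proj_vdot_le0_edist0 S x p y : convex_set S -> is_proj S x p ->
  edist y S = 0 -> vdot (x - p) (y - p) <= 0.
Proof.
move=> S_cvx [Sp p_min] y0.
apply: (@le0_of_le_mul_small _ _ (\sum_(j < n) `|(x - p) 0 j|)); first exact: sumr_ge0.
move=> e e_gt0; have [s Ss] := edist_approx y (ex_intro _ p Sp) e_gt0.
rewrite y0 add0r => ys_lt.
have -> : y - p = (s - p) + (y - s) by apply/rowP => j; rewrite !mxE; ring.
rewrite vdotDr.
have := is_proj_vdot_le0 S_cvx (conj Sp p_min) Ss.
have := vdot_le_sum_normr (x - p) (y - s).
have : (\sum_(j < n) `|(x - p) 0 j|) * enorm (y - s) <= (\sum_(j < n) `|(x - p) 0 j|) * e.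
  by rewrite ler_wpM2l ?sumr_ge0 ?ltW.
lra.
Qed.

End Distance.

Section NegativeOrthantShift.
Variables (R : realType) (m : nat).
Implicit Types (Q : set 'rV[R]_m) (y p : 'rV[R]_m).

Lemma Qplus_neq0 Q : Q !=set0 -> Qplus Q !=set0.
Proof. by move=> [y Qy]; exists y, y, 0; do ![split] => // [i|]; rewrite ?mxE ?subr0. Qed.

Lemma convex_Qplus Q : convex_set Q -> convex_set (Qplus Q).
Proof.
move=> Q_cvx _ _ t /set_mem [y1 [u1 [Qy1 [u1_ge0 ->]]]] /set_mem [y2 [u2 [Qy2 [u2_ge0 ->]]]].
apply: mem_set; have /set_mem Qy := Q_cvx y1 y2 t (mem_set Qy1) (mem_set Qy2).
exists (conv t (y1 : convex_lmodType 'rV[R]_m) y2), (t%:num *: u1 + (1 - t%:num) *: u2).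
do ![split] => // [j|]; first by rewrite !mxE addr_ge0 // mulr_ge0.
change (t%:num *: (y1 - u1) + (1 - t%:num) *: (y2 - u2) =
  (t%:num *: y1 + (1 - t%:num) *: y2) - (t%:num *: u1 + (1 - t%:num) *: u2)).
by apply/rowP => j; rewrite !mxE; ring.
Qed.

(* If y - p had a negative entry, lowering p in that coordinate would stay in
   Q^+ and bring it closer to y. *)
Lemma is_proj_Qplus_ge0 Q y p : is_proj (Qplus Q) y p -> forall i, 0 <= (y - p) 0 i.
Proof.
move=> [[y0 [u [Qy0 [u_ge0 ->]]]] p_min] i; set a := y - (y0 - u).
rewrite leNgt; apply/negP => ai_lt0; set t := - a 0 i.
have : Qplus Q (y0 - (u + t *: delta_mx 0 i)).
  exists y0, (u + t *: delta_mx 0 i); do ![split] => // j.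
  by rewrite !mxE addr_ge0 // mulr_ge0 // /t; lra.
move/p_min; rewrite ler_enorm.
have -> : y - (y0 - (u + t *: delta_mx 0 i)) = a + t *: delta_mx 0 i.
  by apply/rowP => j; rewrite /a !mxE; ring.
rewrite -/a; clearbody a.
rewrite vdotDl !vdotDr !vdotZr !vdotZl (vdotC (delta_mx _ _)) !vdot_delta mxE !eqxx mulr1 /t.
nra.
Qed.

End NegativeOrthantShift.

Section Scalarization.
Variables (R : realType) (n m : nat).
Variables (f : 'I_m.+1 -> 'rV[R]_n -> R) (r : 'I_m.+1 -> R) (C : set 'rV[R]_n).

Definition phi_term i x := r i * (f i x - zstar f C i).

Lemma phi_term_le x i : phi_term i x <= phi f r C x.
Proof. exact: (le_bigmax _ (fun i => phi_term i x) i). Qed.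

Lemma phi_le x c : (forall i, phi_term i x <= c) -> phi f r C x <= c.
Proof. by move=> xc; apply: bigmax_le => [|i _]; [exact: (xc ord0) | exact: xc]. Qed.

Lemma phi_argmax x j : (forall i, phi_term i x <= phi_term j x) ->
  phi f r C x = phi_term j x.
Proof. by move=> jmax; apply/eqP; rewrite eq_le phi_le // phi_term_le. Qed.

Lemma phi_ge0 x : (forall i, 0 < r i) -> (forall i, has_lbound [set f i y | y in C]) ->
  C x -> 0 <= phi f r C x.
Proof.
move=> r_gt0 f_lb Cx; apply: le_trans (phi_term_le x ord0).
by rewrite /phi_term mulr_ge0 ?(ltW (r_gt0 _)) // subr_ge0 ge_inf //; exists x.
Qed.

End Scalarization.

Lemma increasing_selection (P : nat -> nat -> Prop) :
  (forall j K, exists k, (K <= k)%N /\ P j k) ->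
  exists s : nat -> nat, (forall j, (s j < s j.+1)%N) /\ forall j, P j (s j).
Proof.
move=> PK; have [pick pickP] := choice (fun jK : nat * nat => PK jK.1 jK.2).
pose fix s j := if j is j'.+1 then pick (j, (s j').+1) else pick (0, 0)%N.
exists s; split => [j|[|j]] /=.
- by have [+ _] := pickP (j.+1, (s j).+1).
- by have [_ +] := pickP (0, 0)%N.
- by have [_ +] := pickP (j.+1, (s j).+1).
Qed.

Section Sequences.
Variable R : realType.

Lemma cvg_dist_lt_invS (n : nat) (y : nat -> 'rV[R]_n) p :
  (forall j, `|p - y j| < j.+1%:R^-1) -> y @ \oo --> p.
Proof.
move=> y_close; apply/cvgrPdist_lt => e e_gt0.
have [N _ invN] := near_infty_natSinv_lt (PosNum e_gt0).
by exists N => // j /= Nj; exact: lt_trans (y_close j) (invN j Nj).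
Qed.

Lemma compact_cluster_seq (n : nat) (y : nat -> 'rV[R]_n) (A : set 'rV[R]_n) :
  compact A -> (forall k, A (y k)) ->
  exists2 p, A p & forall e K, 0 < e -> exists k, (K <= k)%N /\ `|p - y k| < e.
Proof.
move=> A_cpt Ay; have [|p [Ap p_cluster]] := A_cpt (y @ \oo) _.
  by exists 0%N => // k _; exact: Ay.
exists p => // e K e_gt0.
have [_ [[k /= Kk <-] yk_near]] := p_cluster [set y k | k in [set k | (K <= k)%N]]
  (ball p e) (ex_intro2 _ _ K I (fun k Kk => ex_intro2 _ _ k Kk erefl))
  (nbhsx_ballx p e e_gt0).
by exists k; split => //; move: yk_near; rewrite -ball_normE.
Qed.

Lemma nonneg_series_le_lim (u : nat -> R) N : (forall k, 0 <= u k) -> cvgn (series u) ->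
  series u N <= limn (series u).
Proof.
move=> u_ge0 u_cvg; apply: nondecreasing_cvgn_le => // a b ab.
exact: (@nondecreasing_series _ u xpredT 0).
Qed.

(* If g stayed above e from K on, the sums of lam k * g k would grow like
   e times the divergent partial sums of lam. *)
Lemma divergent_weights_small_often (lam g : nat -> R) B :
  (forall k, 0 <= lam k) -> (forall k, 0 <= g k) -> series lam @ \oo --> +oo ->
  (forall N, \sum_(0 <= k < N) lam k * g k <= B) ->
  forall e K, 0 < e -> exists k, (K <= k)%N /\ g k < e.
Proof.
move=> lam_ge0 g_ge0 lam_oo sum_le e K e_gt0; apply: contrapT => g_large.
have ge_e k : (K <= k)%N -> e <= g k.
  by move=> Kk; rewrite leNgt; apply/negP => gk_lt; apply: g_large; exists k.
have tail_le N : (K <= N)%N -> e * (series lam N - series lam K) <= B.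
  move=> KN; rewrite /series /= (big_cat_nat _ KN) //= addrAC subrr add0r mulr_sumr.
  apply: le_trans (sum_le N); rewrite [leRHS](@big_cat_nat _ _ _ K) //= -[leLHS]add0r.
  apply: lerD; first by apply: sumr_ge0 => k _; exact: mulr_ge0.
  rewrite big_nat_cond [leRHS]big_nat_cond; apply: ler_sum => k /andP [/andP [Kk _] _].
  by rewrite mulrC ler_wpM2l // ge_e.
move/cvgryPge: lam_oo => /(_ (series lam K + B / e + 1)) [N0 _ lamN].
have := lamN (maxn N0 K) (leq_maxl _ _); have := tail_le (maxn N0 K) (leq_maxr _ _).
rewrite -ler_pdivlMl // => tail; rewrite mulrC in tail; lra.
Qed.

End Sequences.

Section Bounds.
Variable R : realType.

Lemma continuous_family_bounded_compact n (I : finType) (g : I -> 'rV[R]_n -> R)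
  (K : set 'rV[R]_n) : compact K -> (forall i, continuous (g i)) ->
  exists M, forall i y, K y -> `|g i y| <= M.
Proof.
move=> K_cpt g_cont.
have gK_bnd i : exists M, forall y, K y -> `|g i y| <= M.
  have [M [_ gM]] := compact_bounded
    (continuous_compact (continuous_subspaceT (g_cont i)) K_cpt).
  by exists (M + 1) => y Ky; apply: (gM (M + 1)); [rewrite ltrDl | exists y].
have [M gM] := choice gK_bnd; exists (\sum_i `|M i|) => i y Ky.
rewrite (le_trans (gM i y Ky)) // (le_trans (ler_norm _)) //.
by rewrite (bigD1 i) //= lerDl sumr_ge0.
Qed.

Definition box n (c : 'rV[R]_n) (rad : R) : set 'rV[R]_n :=
  [set v | forall i, `[c 0 i - rad, c 0 i + rad]%classic (v 0 i)].

Lemma box_compact n (c : 'rV[R]_n) rad : compact (box c rad).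
Proof. exact: rV_compact (fun i => @segment_compact R _ _). Qed.

Lemma box_of_enorm_le n (c v : 'rV[R]_n) rad : enorm (v - c) <= rad -> box c rad v.
Proof.
move=> vc i /=; rewrite in_itv /=.
have := le_trans (normr_coord_le_enorm (v - c) i) vc.
by rewrite !mxE ler_norml; lra.
Qed.

End Bounds.

Section ABP.
Variables (R : realType) (n m : nat).
Variables (f : 'I_m.+1 -> 'rV[R]_n.+1 -> R) (r : 'I_m.+1 -> R).
Variables (C : set 'rV[R]_n.+1) (Q : set 'rV[R]_m.+1) (mu : R).
Variables (alpha beta gamma lam : nat -> R) (alo ahi blo bhi glo ghi : R).
Variables (x : nat -> 'rV[R]_n.+1) (istar : nat -> 'I_m.+1).
Variables (pQ : nat -> 'rV[R]_m.+1) (pC : nat -> 'rV[R]_n.+1).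
Hypotheses (r_gt0 : forall i, 0 < r i) (r_sum1 : \sum_(i < m.+1) r i = 1).
Hypothesis mu_gt0 : 0 < mu.
Hypothesis abp : ABP_seq f r C Q mu alpha beta gamma lam x istar pQ pC.
Hypotheses (f_C1 : forall i, C1 (f i)) (f_convex : forall i, convex_function setT (f i)).
Hypotheses (C_neq0 : C !=set0) (C_closed : closed C) (C_convex : convex_set C).
Hypotheses (Q_neq0 : Q !=set0) (Q_convex : convex_set Q).
Hypothesis f_lbound : forall i, has_lbound [set f i y | y in C].
Hypotheses (lam_gt0 : forall k, 0 < lam k) (lam_oo : series lam @ \oo --> +oo).
Hypothesis lam_sqr_cvg : cvgn (series (fun k => lam k ^+ 2)).
Hypotheses (alo_gt0 : 0 < alo) (alpha_bnd : forall k, alo <= alpha k <= ahi).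
Hypotheses (blo_gt0 : 0 < blo) (beta_bnd : forall k, blo <= beta k <= bhi).
Hypotheses (glo_gt0 : 0 < glo) (gamma_bnd : forall k, glo <= gamma k <= ghi).
Hypothesis philb_phistar : philb f r C = phistar f r C Q.

Definition rho k := Fvec f (x k) - pQ k.
Definition zC k := x k - pC k.
Definition vF k := \sum_(i < m.+1) rho k 0 i *: grad (f i) (x k).
Definition wphi k := r (istar k) *: grad (f (istar k)) (x k).
Definition Delta k := phi f r C (x k) - philb f r C.
Definition dir k := (alpha k * (if 0 <= Delta k then 1 else 0)) *: wphi k
  + beta k *: zC k + gamma k *: vF k.
Definition eta k := Num.max mu (enorm (dir k)).

(* Vanishes exactly when x^k is feasible and phi(x^k) <= phi_lb; the Fejer
   inequality controls its sum weighted by lam k / eta k. *)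
Definition residual k :=
  alo * Num.max (Delta k) 0 + blo * vdot (zC k) (zC k) + glo * vdot (rho k) (rho k).

Lemma abp_step k : x k.+1 = x k - (lam k / eta k) *: dir k.
Proof. by have [_ [_ [_]]] := abp k. Qed.

Lemma abp_projQ k : is_proj (Qplus Q) (Fvec f (x k)) (pQ k).
Proof. by have [] := abp k. Qed.

Lemma abp_projC k : is_proj C (x k) (pC k).
Proof. by have [_ []] := abp k. Qed.

Lemma abp_argmax k i : phi_term f r C i (x k) <= phi_term f r C (istar k) (x k).
Proof. by have [_ [_ [+ _]]] := abp k; apply. Qed.

Lemma f_differentiable i y : differentiable (f i) y.
Proof. exact: (f_C1 i).1. Qed.

Lemma f_continuous i : continuous (f i).
Proof. by move=> y; exact/differentiable_continuous/f_differentiable. Qed.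

Lemma r_le1 i : r i <= 1.
Proof. by rewrite -r_sum1 (bigD1 i) //= lerDl sumr_ge0 // => j _; exact: ltW. Qed.

Lemma residual_parts_ge0 k : [/\ 0 <= alo * Num.max (Delta k) 0,
  0 <= blo * vdot (zC k) (zC k) & 0 <= glo * vdot (rho k) (rho k)].
Proof.
split; apply: mulr_ge0; rewrite ?vdotvv_ge0 ?(ltW alo_gt0) ?(ltW blo_gt0) ?(ltW glo_gt0) //.
by rewrite le_max lexx orbT.
Qed.

Lemma residual_ge0 k : 0 <= residual k.
Proof. by have [] := residual_parts_ge0 k; rewrite /residual; lra. Qed.

Lemma Delta_lt k e : residual k < alo * e -> Delta k < e.
Proof.
have [_ ? ?] := residual_parts_ge0 k; move=> res_lt.
rewrite -(ltr_pM2l alo_gt0); apply: le_lt_trans res_lt.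
have : alo * Delta k <= alo * Num.max (Delta k) 0.
  by rewrite ler_wpM2l ?(ltW alo_gt0) // le_max lexx.
rewrite /residual; lra.
Qed.

Lemma enorm_zC_lt k e : 0 <= e -> residual k < blo * e ^+ 2 -> enorm (zC k) < e.
Proof.
have [? _ ?] := residual_parts_ge0 k; move=> e_ge0 res_lt; apply: enorm_lt e_ge0.
by rewrite -(ltr_pM2l blo_gt0); apply: le_lt_trans res_lt; rewrite /residual; lra.
Qed.

Lemma enorm_rho_lt k e : 0 <= e -> residual k < glo * e ^+ 2 -> enorm (rho k) < e.
Proof.
have [? ? _] := residual_parts_ge0 k; move=> e_ge0 res_lt; apply: enorm_lt e_ge0.
by rewrite -(ltr_pM2l glo_gt0); apply: le_lt_trans res_lt; rewrite /residual; lra.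
Qed.

Lemma f_near_uniform p e : 0 < e ->
  exists2 d, 0 < d & forall y, `|p - y| < d -> forall i, `|f i p - f i y| < e.
Proof.
move=> e_gt0; have : \forall y \near p, forall i, `|f i p - f i y| < e.
  apply: (@filter_forall _ _ (fun i y => `|f i p - f i y| < e) (nbhs p) _) => i.
  by move/cvgrPdist_lt: (@f_continuous i p); apply.
by move/nbhs_normP => [d /= d_gt0 pd]; exists d => // y py; apply: pd.
Qed.

Definition residual_cluster p :=
  forall e d, 0 < e -> 0 < d -> exists k, `|p - x k| < e /\ residual k < d.

Section ResidualCluster.
Variable p : 'rV[R]_n.+1.
Hypothesis p_cluster : residual_cluster p.

Lemma cluster_edistC : edist p C = 0.
Proof.
apply: (@edist_eq0_approx _ _ p C C_neq0) => e e_gt0; have e2_gt0 : 0 < e / 2 by rewrite divr_gt0.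
have [k [pxk res_lt]] := p_cluster e2_gt0 (mulr_gt0 blo_gt0 (exprn_gt0 2 e2_gt0)).
exists (pC k); first exact: (abp_projC k).1.
have := le_lt_trans (normr_le_enorm _) (enorm_zC_lt (ltW e2_gt0) res_lt).
have -> : p - pC k = (p - x k) + zC k by rewrite /zC addrA subrK.
by move=> zk_lt; rewrite (le_trans (ler_normD _ _)) //; lra.
Qed.

Lemma cluster_edistQ : edist (Fvec f p) (Qplus Q) = 0.
Proof.
apply: (@edist_eq0_approx _ _ (Fvec f p) _ (Qplus_neq0 Q_neq0)) => e e_gt0.
have e2_gt0 : 0 < e / 2 by rewrite divr_gt0.
have [d d_gt0 f_close] := f_near_uniform p e2_gt0.
have [k [pxk res_lt]] := p_cluster d_gt0 (mulr_gt0 glo_gt0 (exprn_gt0 2 e2_gt0)).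
exists (pQ k); first exact: (abp_projQ k).1.
have Fpk : `|Fvec f p - Fvec f (x k)| <= e / 2.
  by apply: rV_normr_le (ltW e2_gt0) _ => j; rewrite !mxE; exact/ltW/f_close.
have := le_lt_trans (normr_le_enorm _) (enorm_rho_lt (ltW e2_gt0) res_lt).
have -> : Fvec f p - pQ k = (Fvec f p - Fvec f (x k)) + rho k by rewrite /rho addrA subrK.
by move=> rk_lt; rewrite (le_trans (ler_normD _ _)) //; lra.
Qed.

Lemma cluster_phi_le : phi f r C p <= philb f r C.
Proof.
apply: phi_le => i; rewrite -subr_le0; apply: (le0_of_le_mul_small (ler0n _ 2)) => e e_gt0.
have [d d_gt0 f_close] := f_near_uniform p e_gt0.
have [k [pxk res_lt]] := p_cluster d_gt0 (mulr_gt0 alo_gt0 e_gt0).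
have := Delta_lt res_lt; have := phi_term_le f r C (x k) i.
have : r i * (f i p - f i (x k)) <= e.
  rewrite (le_trans (ler_norm _)) // normrM -[e]mul1r.
  by apply: ler_pM => //; [rewrite ger0_norm ?r_le1 ?ltW | exact/ltW/f_close].
have -> : phi_term f r C i p = phi_term f r C i (x k) + r i * (f i p - f i (x k)).
  by rewrite /phi_term; ring.
rewrite /Delta; lra.
Qed.

Lemma cluster_in_Omega : Omega f r C Q p.
Proof.
have Cp : C p by apply: C_closed; exact: edist_eq0_closure C_neq0 cluster_edistC.
split; first by split; apply/sqr_half_eq0; [exact: cluster_edistC | exact: cluster_edistQ].
rewrite -philb_phistar; apply/eqP; rewrite eq_le cluster_phi_le /=.
rewrite /philb ge_inf //; last by exists p.
by exists 0 => _ [y Cy <-]; exact: phi_ge0.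
Qed.

End ResidualCluster.

Section Fejer.
Variable xs : 'rV[R]_n.+1.
Hypothesis xs_Omega : Omega f r C Q xs.

Lemma xs_edistC : edist xs C = 0.
Proof. by case: xs_Omega => -[/sqr_half_eq0]. Qed.

Lemma xs_edistQ : edist (Fvec f xs) (Qplus Q) = 0.
Proof. by case: xs_Omega => -[_ /sqr_half_eq0]. Qed.

Lemma vdot_zC_ge k : vdot (zC k) (zC k) <= vdot (zC k) (x k - xs).
Proof.
have : vdot (zC k) (xs - pC k) <= 0.
  exact: is_proj_vdot_le0_edist0 C_convex (abp_projC k) xs_edistC.
have -> : x k - xs = zC k - (xs - pC k) by apply/rowP => j; rewrite !mxE; ring.
rewrite [vdot (zC k) (zC k - _)]vdotBr; lra.
Qed.

Lemma vdot_vF_ge k : vdot (rho k) (rho k) <= vdot (vF k) (x k - xs).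
Proof.
have : vdot (rho k) (Fvec f xs - pQ k) <= 0.
  exact: is_proj_vdot_le0_edist0 (convex_Qplus Q_convex) (abp_projQ k) xs_edistQ.
have -> : vdot (rho k) (Fvec f xs - pQ k) =
    vdot (rho k) (rho k) - vdot (rho k) (Fvec f (x k) - Fvec f xs).
  by rewrite -vdotBr; congr vdot; apply/rowP => j; rewrite /rho !mxE; ring.
suff : vdot (rho k) (Fvec f (x k) - Fvec f xs) <= vdot (vF k) (x k - xs) by lra.
rewrite /vF vdot_suml [leLHS]/vdot; apply: ler_sum => i _.
rewrite vdotZl !mxE; apply: ler_wpM2l.
- by have := is_proj_Qplus_ge0 (abp_projQ k) i; rewrite !mxE.
- exact: convex_sub_le_grad xs (f_convex i) (@f_differentiable i (x k)).
Qed.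

Lemma vdot_wphi_ge k : Delta k <= vdot (wphi k) (x k - xs).
Proof.
have phi_xs : phi f r C xs = philb f r C by rewrite philb_phistar; case: xs_Omega.
have := phi_term_le f r C xs (istar k); rewrite phi_xs.
rewrite /wphi vdotZl /Delta (phi_argmax (abp_argmax k)) /phi_term.
have := convex_sub_le_grad xs (f_convex (istar k)) (@f_differentiable (istar k) (x k)).
move/(ler_wpM2l (ltW (r_gt0 (istar k)))); rewrite !mulrBr; lra.
Qed.

Lemma residual_le_vdot_dir k : residual k <= vdot (dir k) (x k - xs).
Proof.
rewrite /dir !vdotDl (vdotZl (alpha k * _)) (vdotZl (beta k)) (vdotZl (gamma k)) /residual.
have [/andP [alo_le _] /andP [blo_le _] /andP [glo_le _]] :=
  And3 (alpha_bnd k) (beta_bnd k) (gamma_bnd k).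
have z_part : blo * vdot (zC k) (zC k) <= beta k * vdot (zC k) (x k - xs).
  by apply: ler_pM; rewrite ?vdotvv_ge0 ?(ltW blo_gt0) ?vdot_zC_ge.
have v_part : glo * vdot (rho k) (rho k) <= gamma k * vdot (vF k) (x k - xs).
  by apply: ler_pM; rewrite ?vdotvv_ge0 ?(ltW glo_gt0) ?vdot_vF_ge.
suff w_part : alo * Num.max (Delta k) 0 <=
    alpha k * (if 0 <= Delta k then 1 else 0) * vdot (wphi k) (x k - xs) by lra.
case: ifP => [Delta_ge0|/negbT]; last by rewrite -ltNge => /ltW/max_r ->; rewrite !mulr0 mul0r.
rewrite mulr1 (max_idPl Delta_ge0).
by apply: ler_pM; rewrite ?(ltW alo_gt0) ?vdot_wphi_ge.
Qed.

Lemma eta_gt0 k : 0 < eta k.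
Proof. by rewrite lt_max mu_gt0. Qed.

Lemma fejer_step k : vdot (x k.+1 - xs) (x k.+1 - xs) <=
  vdot (x k - xs) (x k - xs) - 2 * (lam k / eta k) * residual k + lam k ^+ 2.
Proof.
set s := lam k / eta k.
have -> : x k.+1 - xs = (x k - xs) - s *: dir k.
  by rewrite abp_step /s; apply/rowP => j; rewrite !mxE; ring.
rewrite (vdotBB (x k - xs) (s *: dir k)) !vdotZr vdotZl (vdotC _ (dir k)).
have s_ge0 : 0 <= s by exact: divr_ge0 (ltW (lam_gt0 k)) (ltW (eta_gt0 k)).
have seta : s * eta k = lam k by rewrite /s divfK // gt_eqF // eta_gt0.
have := residual_le_vdot_dir k; clearbody s.
have dd_le : vdot (dir k) (dir k) <= eta k ^+ 2.
  rewrite -enorm_sqr lerXn2r ?nnegrE ?enorm_ge0 ?(ltW (eta_gt0 k)) //.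
  by rewrite le_max lexx orbT.
have : s * (s * vdot (dir k) (dir k)) <= lam k ^+ 2.
  by rewrite -seta mulrA -expr2 exprMn ler_wpM2l // sqr_ge0.
nra.
Qed.

Lemma fejer_sum N :
  vdot (x N - xs) (x N - xs) + 2 * \sum_(0 <= k < N) (lam k / eta k) * residual k
  <= vdot (x 0 - xs) (x 0 - xs) + \sum_(0 <= k < N) lam k ^+ 2.
Proof.
elim: N => [|N IH]; first by rewrite !big_geq // mulr0 !addr0.
by rewrite !big_nat_recr //=; have := fejer_step N; lra.
Qed.

Lemma fejer_bounds : exists B, (forall k, vdot (x k - xs) (x k - xs) <= B) /\
  forall N, \sum_(0 <= k < N) (lam k / eta k) * residual k <= B.
Proof.
exists (vdot (x 0 - xs) (x 0 - xs) + limn (series (fun k => lam k ^+ 2))).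
have weighted_ge0 N : 0 <= \sum_(0 <= k < N) (lam k / eta k) * residual k.
  apply: sumr_ge0 => k _; apply: mulr_ge0 (residual_ge0 k).
  exact: divr_ge0 (ltW (lam_gt0 k)) (ltW (eta_gt0 k)).
have sqr_le N := @nonneg_series_le_lim _ (fun k => lam k ^+ 2) N (fun k => sqr_ge0 _) lam_sqr_cvg.
rewrite /series /= in sqr_le.
split=> N; have := fejer_sum N; have := sqr_le N; have := weighted_ge0 N;
  have := vdotvv_ge0 (x N - xs); lra.
Qed.

Lemma iterates_enorm_bounded : exists M, forall k, enorm (x k - xs) <= M.
Proof.
have [B [dist_le _]] := fejer_bounds; exists (Num.sqrt B) => k.
by rewrite enormE ler_sqrt ?dist_le // (le_trans (vdotvv_ge0 _) (dist_le k)).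
Qed.

Lemma iterates_in_box : exists rad, forall k, box xs rad (x k).
Proof. by have [M x_close] := iterates_enorm_bounded; exists M => k; exact: box_of_enorm_le. Qed.

Lemma grad_bounded : exists M, forall i k, `|grad (f i) (x k)| <= M.
Proof.
have [rad x_box] := iterates_in_box.
have [M dfM] := continuous_family_bounded_compact (@box_compact _ _ xs rad)
  (fun ij : 'I_m.+1 * 'I_n.+1 => (f_C1 ij.1).2 ij.2).
exists M => i k; apply: rV_normr_le => [|j]; last by rewrite mxE; exact: (dfM (i, j)).
exact: le_trans (normr_ge0 _) (dfM (i, ord0) _ (x_box 0%N)).
Qed.

Lemma rho_bounded : exists M, forall k, enorm (rho k) <= M.
Proof.
have [rad x_box] := iterates_in_box.
have [M fM] := continuous_family_bounded_compact (@box_compact _ _ xs rad) f_continuous.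
have [q Qq] := Qplus_neq0 Q_neq0.
exists (m.+1%:R * (M + `|q|)) => k.
apply: le_trans ((abp_projQ k).2 q Qq) _; apply: le_trans (enorm_le_normr _) _.
rewrite ler_wpM2l // (le_trans (ler_normB _ _)) // lerD2r.
apply: rV_normr_le => [|j]; last by rewrite mxE; exact: fM.
exact: le_trans (normr_ge0 _) (fM ord0 _ (x_box 0%N)).
Qed.

Lemma zC_bounded : exists M, forall k, enorm (zC k) <= M.
Proof.
have [M x_close] := iterates_enorm_bounded; exists M => k.
have xs_C : C xs by apply: C_closed; exact: edist_eq0_closure C_neq0 xs_edistC.
exact: le_trans ((abp_projC k).2 xs xs_C) (x_close k).
Qed.

Lemma dir_bounded : exists M, forall k, `|dir k| <= M.
Proof.
have [Mg gM] := grad_bounded; have [Mr rM] := rho_bounded; have [Mz zM] := zC_bounded.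
exists (ahi * Mg + bhi * Mz + ghi * (m.+1%:R * (Mr * Mg))) => k.
have [/andP [alo_le ahi_ge] /andP [blo_le bhi_ge] /andP [glo_le ghi_ge]] :=
  And3 (alpha_bnd k) (beta_bnd k) (gamma_bnd k).
have alpha_ge0 := le_trans (ltW alo_gt0) alo_le.
have beta_ge0 := le_trans (ltW blo_gt0) blo_le.
have gamma_ge0 := le_trans (ltW glo_gt0) glo_le.
have Mg_ge0 := le_trans (normr_ge0 _) (gM ord0 k).
have w_le : `|(alpha k * (if 0 <= Delta k then 1 else 0)) *: wphi k| <= ahi * Mg.
  rewrite normrZ; apply: ler_pM => //.
    by case: ifP => _; rewrite ?mulr1 ?mulr0 ?normr0 ?ger0_norm // (le_trans alpha_ge0).
  rewrite /wphi normrZ -[Mg]mul1r; apply: ler_pM => //.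
  by rewrite ger0_norm ?r_le1 // (ltW (r_gt0 _)).
have z_le : `|beta k *: zC k| <= bhi * Mz.
  rewrite normrZ ger0_norm //; apply: ler_pM => //.
  exact: le_trans (normr_le_enorm _) (zM k).
have v_le : `|gamma k *: vF k| <= ghi * (m.+1%:R * (Mr * Mg)).
  rewrite normrZ ger0_norm //; apply: ler_pM => //.
  apply: le_trans (ler_norm_sum _ _ _) _.
  rewrite (@le_trans _ _ (\sum_(i < m.+1) Mr * Mg)) //; last first.
    by rewrite sumr_const card_ord mulr_natl.
  apply: ler_sum => i _.
  rewrite normrZ; apply: ler_pM => //; exact: le_trans (normr_coord_le_enorm _ _) (rM k).
by rewrite /dir (le_trans (ler_normD _ _)) // lerD // (le_trans (ler_normD _ _)) // lerD.
Qed.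


Lemma eta_bounded : exists M, forall k, eta k <= M.
Proof.
have [M dM] := dir_bounded; exists (Num.max mu (n.+1%:R * M)) => k.
rewrite /eta ge_max le_max lexx /= le_max; apply/orP; right.
by rewrite (le_trans (enorm_le_normr _)) // ler_wpM2l.
Qed.

Lemma residual_small_often e K : 0 < e -> exists k, (K <= k)%N /\ residual k < e.
Proof.
have [B [_ sum_le]] := fejer_bounds; have [M etaM] := eta_bounded.
apply: (divergent_weights_small_often _ residual_ge0 lam_oo (B := M * B)).
  by move=> k; exact: ltW.
move=> N; apply: le_trans (_ : M * \sum_(0 <= k < N) (lam k / eta k) * residual k <= _).
  rewrite mulr_sumr; apply: ler_sum => k _.
  rewrite mulrA ler_wpM2r ?residual_ge0 // -[lam k in leLHS](divfK (lt0r_neq0 (eta_gt0 k))).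
  by rewrite mulrC ler_wpM2r ?divr_ge0 ?(ltW (lam_gt0 k)) ?(ltW (eta_gt0 k)).
by rewrite ler_wpM2l ?sum_le // (le_trans (ltW (eta_gt0 0%N)) (etaM 0%N)).
Qed.

Lemma abp_subseq_cvg_Omega : exists (kj : nat -> nat) (xinf : 'rV[R]_n.+1),
  (forall j, (kj j < kj j.+1)%N) /\ Omega f r C Q xinf /\
  (fun j => x (kj j)) @ \oo --> xinf.
Proof.
have invS_gt0 j : 0 < j.+1%:R^-1 :> R by rewrite invr_gt0 ltr0Sn.
have [s1 [s1_incr s1_small]] :=
  increasing_selection (fun j K => residual_small_often K (invS_gt0 j)).
have [rad x_box] := iterates_in_box.
have [p _ p_cluster] := compact_cluster_seq (@box_compact _ _ xs rad) (fun j => x_box (s1 j)).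
have [s2 [s2_incr s2_close]] :=
  increasing_selection (fun j K => p_cluster _ K (invS_gt0 j)).
exists (s1 \o s2), p; split; first by move=> j; exact: homo_ltn ltn_trans s1_incr _ _ (s2_incr j).
split; last exact: cvg_dist_lt_invS s2_close.
apply: cluster_in_Omega => e d e_gt0 d_gt0.
have [N _ invN] := near_infty_natSinv_lt (PosNum d_gt0).
have [j [Nj pxj]] := p_cluster e N e_gt0.
by exists (s1 j); split => //; exact: lt_trans (s1_small j) (invN j Nj).
Qed.

End Fejer.

End ABP.

Unset Implicit Arguments.
Set Strict Implicit.
Theorem proposition6 (R : realType) (n m : nat)
  (f : 'I_m.+1 -> 'rV[R]_n.+1 -> R) (r : 'I_m.+1 -> R)
  (C : set 'rV[R]_n.+1) (Q : set 'rV[R]_m.+1) (mu : R)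
  (alpha beta gamma lam : nat -> R)
  (alo ahi blo bhi glo ghi : R)
  (x : nat -> 'rV[R]_n.+1) (istar : nat -> 'I_m.+1)
  (pQ : nat -> 'rV[R]_m.+1) (pC : nat -> 'rV[R]_n.+1) :
  (forall i, 0 < r i) -> \sum_(i < m.+1) r i = 1 ->
  0 < mu ->
  ABP_seq f r C Q mu alpha beta gamma lam x istar pQ pC ->
  (* (A1) *) (forall i, C1 (f i)) ->
  (* (A2) *) C !=set0 -> closed C -> convex_set C ->
             Q !=set0 -> closed Q -> convex_set Q ->
             (forall i, has_lbound [set f i y | y in C]) ->
  (* (A3) *) (forall i, convex_function setT (f i)) ->
  (* (A4) *) Omega f r C Q !=set0 ->
  (* (A5) *) (forall k, 0 < lam k) ->
             series lam @ \oo --> +oo ->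
             cvgn (series (fun k => lam k ^+ 2)) ->
  (* (A6) *) 0 < alo -> (forall k, alo <= alpha k <= ahi) ->
             0 < blo -> (forall k, blo <= beta k <= bhi) ->
             0 < glo -> (forall k, glo <= gamma k <= ghi) ->
  (* (A7) *) philb f r C = phistar f r C Q ->
  exists (kj : nat -> nat) (xinf : 'rV[R]_n.+1),
    (forall j, (kj j < kj j.+1)%N) /\
    Omega f r C Q xinf /\
    (fun j => x (kj j)) @ \oo --> xinf.
Proof.
move=> r_gt0 r_sum1 mu_gt0 abp f_C1 C_neq0 C_closed C_convex Q_neq0 _ Q_convex
  f_lbound f_convex [xs xs_Omega] lam_gt0 lam_oo lam_sqr_cvg
  alo_gt0 alpha_bnd blo_gt0 beta_bnd glo_gt0 gamma_bnd philb_phistar.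
exact: (abp_subseq_cvg_Omega r_gt0 r_sum1 mu_gt0 abp f_C1 f_convex C_neq0 C_closed
  C_convex Q_neq0 Q_convex f_lbound lam_gt0 lam_oo lam_sqr_cvg alo_gt0 alpha_bnd
  blo_gt0 beta_bnd glo_gt0 gamma_bnd philb_phistar xs_Omega).
Qed.
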